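(* Let $X,Y\in\Sigma^*$ and positions $i\le j$ and $i'\le j'$ in $[0,|Y|]$. Let $\mathcal{A}$ be an alignment of $X$ onto $Y[i\,.\,.\,j)$ and $\mathcal{A}'$ an alignment of $X$ onto $Y[i'\,.\,.\,j')$. If $\mathcal{A}$ and $\mathcal{A}'$, viewed as paths in the alignment graph of $X$ and $Y$, do not contain any common diagonal edge, then $\mathrm{selfed}(X)\le|i-i'|+\mathrm{ed}_{\mathcal{A}}(X,Y[i\,.\,.\,j))+\mathrm{ed}_{\mathcal{A}'}(X,Y[i'\,.\,.\,j'))+|j-j'|$.
   Context: $Y[i\,.\,.\,j)$ is the fragment $Y[i]\cdots Y[j-1]$. An alignment of $X$ onto $Y[i\,.\,.\,j)$ is a path in the grid graph on $[0,|X|]\times[0,|Y|]$ from $(0,i)$ to $(|X|,j)$ using steps $(1,0)$, $(0,1)$, $(1,1)$; the steps $(x,y)\to(x+1,y+1)$ are diagonal edges. Its unweighted cost counts steps $(1,0)$, $(0,1)$, and diagonal steps $(x,y)\to(x+1,y+1)$ with $X[x]\ne Y[y]$. A self-alignment of $X$ is an alignment of $X$ onto $X$ with no edge $(x,x)\to(x+1,x+1)$; $\mathrm{selfed}(X)$ is the minimum unweighted cost of a self-alignment. *)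

From Stdlib Require Import ClassicalEpsilon.
From mathcomp Require Import all_boot.
Set Implicit Arguments. Unset Strict Implicit. Unset Printing Implicit Defensive.

(* Grid points (x, y) of the alignment graph of X and Y: x in [0,|X|], y in [0,|Y|]. *)
Definition point := (nat * nat)%type.

Definition is_diag (u v : point) : bool := v == (u.1.+1, u.2.+1).
Definition step (u v : point) : bool :=
  [|| v == (u.1.+1, u.2), v == (u.1, u.2.+1) | is_diag u v].

Definition alignment (T : eqType) (X Y : seq T) (i j : nat) (A : seq point) : bool :=
  if A is a :: p then [&& a == (0, i), path step a p & last a p == (size X, j)]
  else false.

Definition edge_cost (T : eqType) (X Y : seq T) (u v : point) : nat :=
  if is_diag u v then (onth X u.1 != onth Y u.2 : nat) else 1.

Definition cost (T : eqType) (X Y : seq T) (A : seq point) : nat :=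
  if A is a :: p then sumn (pairmap (edge_cost X Y) a p) else 0.

Definition diag_edges (A : seq point) : seq (point * point) :=
  if A is a :: p then [seq e <- pairmap (@pair point point) a p | is_diag e.1 e.2] else [::].

Definition self_alignment (T : eqType) (X : seq T) (A : seq point) : bool :=
  alignment X X 0 (size X) A &&
  (if A is a :: p then path (fun u v => ~~ (is_diag u v && (u.1 == u.2))) a p else false).

(* A self-alignment always exists (go right |X| times, then up |X| times). *)
Definition hv (u v : point) : bool := (v == (u.1.+1, u.2)) || (v == (u.1, u.2.+1)).

Lemma hpath (m n : nat) : path hv (m, 0) [seq (k, 0) | k <- iota m.+1 n].
Proof. by elim: n m => //= n IH m; rewrite /hv /= eqxx IH. Qed.

Lemma vpath (c m n : nat) : path hv (c, m) [seq (c, k) | k <- iota m.+1 n].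
Proof. by elim: n m => //= n IH m; rewrite /hv /= eqxx orbT IH. Qed.

Lemma hlast (m n : nat) : last (m, 0) [seq (k, 0) | k <- iota m.+1 n] = (m + n, 0).
Proof. by elim: n m => [|n IH] m /=; rewrite ?addn0 // IH addSnnS. Qed.

Lemma vlast (c m n : nat) : last (c, m) [seq (c, k) | k <- iota m.+1 n] = (c, m + n).
Proof. by elim: n m => [|n IH] m /=; rewrite ?addn0 // IH addSnnS. Qed.

Lemma self_alignment_exists (T : eqType) (X : seq T) :
  exists A, self_alignment X A.
Proof.
set n := size X.
exists ((0, 0) :: [seq (k, 0) | k <- iota 1 n] ++ [seq (n, k) | k <- iota 1 n]).
have H : path hv (0, 0) ([seq (k, 0) | k <- iota 1 n] ++ [seq (n, k) | k <- iota 1 n]).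
  by rewrite cat_path hpath hlast add0n vpath.
rewrite /self_alignment /alignment /=.
apply/andP; split; first (apply/andP; split).
- apply: sub_path H => u v /orP [] /eqP -> ; by rewrite /step ?eqxx //= orbT.
- by rewrite last_cat hlast add0n vlast add0n.
- apply: sub_path H => u v /orP [] /eqP ->; rewrite /is_diag /= xpair_eqE.
  + by case: u => a b /=; rewrite eqxx (ltn_eqF (ltnSn b)).
  + by case: u => a b /=; rewrite (ltn_eqF (ltnSn a)).
Qed.

Definition has_self_alignment_of_cost (T : eqType) (X : seq T) (c : nat) : bool :=
  if excluded_middle_informative (exists A, self_alignment X A /\ cost X X A = c)
  then true else false.

Lemma has_self_alignment_ex (T : eqType) (X : seq T) :
  exists c, has_self_alignment_of_cost X c.
Proof.
have [A HA] := self_alignment_exists X.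
exists (cost X X A); rewrite /has_self_alignment_of_cost.
by case: excluded_middle_informative => // [[]]; exists A.
Qed.

Definition selfed (T : eqType) (X : seq T) : nat :=
  ex_minn (has_self_alignment_ex X).

From Stdlib Require Import ClassicalEpsilon.
From mathcomp Require Import all_boot zify.
Set Implicit Arguments. Unset Strict Implicit. Unset Printing Implicit Defensive.

(** Sweep both alignments simultaneously, always advancing the one whose
   current point has the smaller [Y]-coordinate.  The pair of current
   [X]-coordinates [(x, x')] traces a path in the self-alignment graph of [X]:
   a step of one alignment alone becomes a horizontal or vertical step, paid
   for by the cost of that step or by the shrinking gap between the two
   [Y]-coordinates.  When both alignments take a diagonal step at the same
   [Y]-position [y], the step [(x, x') -> (x+1, x'+1)] is allowed because the
   diagonal edges differ, so [x <> x'], and its cost [X[x] <> X[x']] is at most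
   [(X[x] <> Y[y]) + (X[x'] <> Y[y])]. *)

Local Notation gap m n := (m - n + (n - m)).

Definition self_step (u v : point) : bool :=
  step u v && ~~ (is_diag u v && (u.1 == u.2)).

Definition self_reachable (T : eqType) (X : seq T) (u v : point) (c : nat) : Prop :=
  exists2 s, path self_step u s && (last u s == v) & cost X X (u :: s) <= c.

Definition swap (u : point) : point := (u.2, u.1).

Lemma neq_triangle (T : eqType) (a b c : T) : ((a != b) : nat) <= (a != c) + (b != c).
Proof.
by case: (a =P c) => [->|_]; case: (b =P c) => [->|_]; rewrite ?eqxx ?leq_b1 //; case: (a != b).
Qed.

Lemma edge_cost_right (T : eqType) (X Y : seq T) (x y : nat) :
  edge_cost X Y (x, y) (x.+1, y) = 1.
Proof. by rewrite /edge_cost /is_diag /= xpair_eqE (ltn_eqF (ltnSn y)) andbF. Qed.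

Lemma edge_cost_up (T : eqType) (X Y : seq T) (x y : nat) :
  edge_cost X Y (x, y) (x, y.+1) = 1.
Proof. by rewrite /edge_cost /is_diag /= xpair_eqE (ltn_eqF (ltnSn x)). Qed.

Lemma edge_cost_diag (T : eqType) (X Y : seq T) (x y : nat) :
  edge_cost X Y (x, y) (x.+1, y.+1) = (onth X x != onth Y y).
Proof. by rewrite /edge_cost /is_diag /= eqxx. Qed.

Lemma edge_cost_swap (T : eqType) (X : seq T) (u v : point) :
  edge_cost X X (swap u) (swap v) = edge_cost X X u v.
Proof.
case: u v => [x y] [a b]; rewrite /edge_cost /is_diag /= !xpair_eqE /= andbC.
by case: ifP => _; rewrite // eq_sym.
Qed.

Lemma self_step_swap (u v : point) : self_step (swap u) (swap v) = self_step u v.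
Proof.
case: u v => [x y] [a b]; rewrite /self_step /step /is_diag /= !xpair_eqE /=.
by apply/idP/idP; lia.
Qed.

Lemma self_step_right (x y : nat) : self_step (x, y) (x.+1, y).
Proof. by rewrite /self_step /step /is_diag /= !xpair_eqE; lia. Qed.

Lemma self_step_up (x y : nat) : self_step (x, y) (x, y.+1).
Proof.
by rewrite -[(x, y)]/(swap (y, x)) -[(x, y.+1)]/(swap (y.+1, x)) self_step_swap self_step_right.
Qed.

Lemma diag_edges_behead (u v : point) (q : seq point) :
  {subset diag_edges (v :: q) <= diag_edges (u :: v :: q)}.
Proof. by move=> e; rewrite /diag_edges /=; case: ifP => // _ He; rewrite inE He orbT. Qed.

Lemma diag_edges_head (u v : point) (q : seq point) :
  is_diag u v -> (u, v) \in diag_edges (u :: v :: q).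
Proof. by rewrite /diag_edges /= => ->; rewrite inE eqxx. Qed.

Lemma step_path_span (T : eqType) (X Y : seq T) (u : point) (p : seq point) :
  path step u p ->
  u.1 <= (last u p).1 /\ (last u p).1 + u.2 <= u.1 + cost X Y (u :: p) + (last u p).2.
Proof.
elim: p u => [|v p IH] [x y] /=; first by rewrite addn0.
case/andP=> + /IH; rewrite /step /is_diag /=.
by case/or3P=> /eqP ->; rewrite /= ?edge_cost_right ?edge_cost_up ?edge_cost_diag /=; lia.
Qed.

Section SelfReachable.

Variables (T : eqType) (X : seq T).

Lemma self_reachable_refl (u : point) : self_reachable X u u 0.
Proof. by exists [::]; rewrite /= ?eqxx. Qed.

Lemma self_reachable_le (u v : point) (c c' : nat) :
  self_reachable X u v c -> c <= c' -> self_reachable X u v c'.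
Proof. by case=> s Hs Hc Hc'; exists s; last exact: leq_trans Hc Hc'. Qed.

Lemma self_reachable_cons (u w v : point) (c : nat) :
  self_step u w -> self_reachable X w v c ->
  self_reachable X u v (edge_cost X X u w + c).
Proof.
by move=> Huw [s /andP[Hs Hv] Hc]; exists (w :: s); rewrite /= ?Huw ?Hs ?leq_add2l.
Qed.

Lemma self_reachable_swap (u v : point) (c : nat) :
  self_reachable X u v c -> self_reachable X (swap u) (swap v) c.
Proof.
case=> s; elim: s u c => [|w s IH] u c /=.
  by move=> /eqP <- _; apply: self_reachable_le (self_reachable_refl _) _.
case/andP=> /andP[Huw Hs] Hv Hc; rewrite -(edge_cost_swap X u w) in Hc.
apply: self_reachable_le Hc; apply: self_reachable_cons; first by rewrite self_step_swap.
by apply: (IH w _ _ (leqnn _)); rewrite Hs Hv.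
Qed.

Lemma self_reachable_up (a b k : nat) : self_reachable X (a, b) (a, b + k) k.
Proof.
elim: k b => [|k IH] b; first by rewrite addn0; apply: self_reachable_refl.
by have := self_reachable_cons (self_step_up a b) (IH b.+1); rewrite edge_cost_up addSnnS.
Qed.

Lemma selfed_le_self_reachable (c : nat) :
  self_reachable X (0, 0) (size X, size X) c -> selfed X <= c.
Proof.
case=> s /andP[Hs Hlast] Hc.
have HA : self_alignment X ((0, 0) :: s).
  rewrite /self_alignment /alignment eqxx Hlast /= andbT.
  by rewrite (sub_path _ Hs) ?(sub_path _ Hs) // => u v /andP[].
have Hcost : has_self_alignment_of_cost X (cost X X ((0, 0) :: s)).
  rewrite /has_self_alignment_of_cost.
  by case: excluded_middle_informative => // [[]]; exists ((0, 0) :: s).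
by rewrite /selfed; case: ex_minnP => m _ /(_ _ Hcost) /leq_trans; apply.
Qed.

End SelfReachable.

(* [u :: p] and [u' :: p'] are the parts of the two alignments not yet swept. *)
Definition merge_cost_bound (T : eqType) (X Y : seq T)
    (u : point) (p : seq point) (u' : point) (p' : seq point) : Prop :=
  self_reachable X (u.1, u'.1) ((last u p).1, (last u' p').1)
    (gap u.2 u'.2 + cost X Y (u :: p) + cost X Y (u' :: p') + gap (last u p).2 (last u' p').2).

Section MergeCostBound.

Variables (T : eqType) (X Y : seq T).

Local Notation bound := (merge_cost_bound X Y).

Lemma merge_cost_bound_sym u p u' p' : bound u p u' p' -> bound u' p' u p.
Proof. by rewrite /merge_cost_bound => /self_reachable_swap/self_reachable_le; apply; lia. Qed.

Lemma merge_cost_bound_nil u u' p' : path step u' p' -> bound u [::] u' p'.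
Proof.
case/(step_path_span X Y) => Hmono Hspan.
rewrite /merge_cost_bound /= -/(cost X Y (u' :: p')).
have := self_reachable_up X u.1 u'.1 ((last u' p').1 - u'.1); rewrite subnKC //.
by move/self_reachable_le; apply; lia.
Qed.

Lemma merge_cost_bound_cons_lower u v q u' p' :
  step u v -> (is_diag u v -> u.2 < u'.2) ->
  bound v q u' p' -> bound u (v :: q) u' p'.
Proof.
case: u => x y; rewrite /step /merge_cost_bound /=.
case/or3P=> /eqP -> /=; rewrite ?edge_cost_right ?edge_cost_up ?edge_cost_diag.
- move=> _ /(self_reachable_cons (self_step_right x u'.1)).
  by rewrite edge_cost_right => /self_reachable_le; apply; lia.
- by move=> _ /self_reachable_le; apply; lia.
- move=> /(_ (eqxx _)) Hy /(self_reachable_cons (self_step_right x u'.1)).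
  by rewrite edge_cost_right => /self_reachable_le; apply; lia.
Qed.

Lemma merge_cost_bound_cons_diag u v q u' v' q' :
  is_diag u v -> is_diag u' v' -> u.2 = u'.2 -> u.1 != u'.1 ->
  bound v q v' q' -> bound u (v :: q) u' (v' :: q').
Proof.
case: u u' => [x y] [x' _] /eqP -> /eqP -> /= <- Hx.
rewrite /merge_cost_bound /= !edge_cost_diag => Hb.
have Hd : self_step (x, x') (x.+1, x'.+1).
  by rewrite /self_step /step /is_diag /= eqxx !orbT /= Hx.
have := self_reachable_cons Hd Hb; rewrite edge_cost_diag => /self_reachable_le; apply.
by have := neq_triangle (onth X x) (onth X x') (onth Y y); lia.
Qed.

Lemma merge_cost_bound_disjoint u p u' p' :
  path step u p -> path step u' p' ->
  (forall e, e \in diag_edges (u :: p) -> e \notin diag_edges (u' :: p')) ->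
  bound u p u' p'.
Proof.
have [n] := ubnP (size p + size p'); elim: n => // n IH in u p u' p' *.
case: p => [|v q]; first by move=> _ _ Hp' _; apply: merge_cost_bound_nil.
case: p' => [|v' q']; first by move=> _ Hp _ _; apply/merge_cost_bound_sym/merge_cost_bound_nil.
rewrite ltnS => Hsize Hp Hp' Hdisj; rewrite /= in Hsize.
move: (Hp) (Hp') => /andP[Huv Hq] /andP[Hu'v' Hq'].
have Hdisj_l e : e \in diag_edges (v :: q) -> e \notin diag_edges (u' :: v' :: q').
  by move/(diag_edges_behead u); apply: Hdisj.
have Hdisj_r e : e \in diag_edges (u :: v :: q) -> e \notin diag_edges (v' :: q').
  by move/Hdisj; apply: contra; apply: diag_edges_behead.
have step_l : (is_diag u v -> u.2 < u'.2) -> bound u (v :: q) u' (v' :: q').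
  move/(merge_cost_bound_cons_lower Huv); apply.
  by apply: (IH _ _ _ _ _ Hq Hp' Hdisj_l) => /=; lia.
have step_r : (is_diag u' v' -> u'.2 < u.2) -> bound u (v :: q) u' (v' :: q').
  move/(merge_cost_bound_cons_lower Hu'v') => Hstep; apply/merge_cost_bound_sym/Hstep.
  by apply/merge_cost_bound_sym/(IH _ _ _ _ _ Hp Hq' Hdisj_r) => /=; lia.
case: (ltngtP u.2 u'.2) => Hy; [exact: step_l | exact: step_r |].
case Hd: (is_diag u v); last by apply: step_l; rewrite Hd.
case Hd': (is_diag u' v'); last by apply: step_r; rewrite Hd'.
apply: merge_cost_bound_cons_diag (Hd) (Hd') (Hy) _ _; last first.
  apply: (IH _ _ _ _ _ Hq Hq'); first lia.
  by move=> e /(diag_edges_behead u)/Hdisj; apply: contra; apply: diag_edges_behead.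
apply/eqP=> Hx; have Eu : u = u' := injective_projections u u' Hx Hy.
have Ev : v = v' by rewrite (eqP Hd) (eqP Hd') Eu.
by move: (Hdisj _ (diag_edges_head q Hd)); rewrite Eu Ev (diag_edges_head q' Hd').
Qed.

End MergeCostBound.

Theorem lemma4p4 (T : eqType) (X Y : seq T) (i j i' j' : nat) (A A' : seq point) :
  i <= j -> j <= size Y -> i' <= j' -> j' <= size Y ->
  alignment X Y i j A -> alignment X Y i' j' A' ->
  (forall e, e \in diag_edges A -> e \notin diag_edges A') ->
  selfed X <= ((i - i') + (i' - i)) + cost X Y A + cost X Y A' + ((j - j') + (j' - j)).
Proof.
move=> _ _ _ _; case: A => [|a p] //; case: A' => [|a' p'] //=.
case/and3P=> /eqP Ea Hp /eqP La; case/and3P=> /eqP Ea' Hp' /eqP La' Hdisj.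
apply: selfed_le_self_reachable.
by have := merge_cost_bound_disjoint X Y Hp Hp' Hdisj; rewrite /merge_cost_bound La La' Ea Ea'.
Qed.
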